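(* Let $G=(V,E)$ be a finite graph and $G_0=(V,E_0)$ a spanning subgraph with $E_0\subseteq E$. Let $q\in\mathbb N$, $\beta\ge0$, and for a graph $H$ on vertex set $V$ let $P_H$ denote the transition matrix of the Swendsen--Wang dynamics for the $q$-state Potts model on $H$ at inverse temperature $\beta$. Then for all $\sigma,\tau\in\{1,\dots,q\}^V$, \[ a_1^{|E\setminus E_0|}\,P_{G_0}(\sigma,\tau)\;\le\;P_G(\sigma,\tau)\;\le\;a_2^{|E\setminus E_0|}\,P_{G_0}(\sigma,\tau), \] where $a_1=a_1(\beta)=e^{-\beta}$ and $a_2=a_2(\beta,q)=1+q(e^\beta-1)$.
   Context: Graphs are finite, parallel edges and loops allowed. For a graph $H=(V,F)$ and $A\subseteq F$, $c(A)$ is the number of connected components of $(V,A)$; for $\sigma\in\{1,\dots,q\}^V$, $F(\sigma)$ is the set of edges of $H$ whose endvertices have the same color in $\sigma$. With $p=1-e^{-\beta}$, the Swendsen--Wang transition matrix on $H$ is $P_H(\sigma,\tau)=(1-p)^{|F(\sigma)|}\sum_{A\subseteq F(\sigma)\cap F(\tau)}\bigl(\tfrac{p}{1-p}\bigr)^{|A|}q^{-c(A)}$. *)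

From HB Require Import structures.
From mathcomp Require Import all_boot all_order all_algebra.
From mathcomp Require Import reals.
From mathcomp Require Import sequences exp.
Set Implicit Arguments. Unset Strict Implicit. Unset Printing Implicit Defensive.
Import Order.TTheory GRing.Theory Num.Theory.
Local Open Scope ring_scope.

(* A finite multigraph on vertex type V: edge labels in a finType Ed, each
   edge e having endpoints ep e = (x, y) (loops x = y and parallel edges are
   allowed).  A graph H on V is given by its edge set H : {set Ed}. *)

Definition adjA (V Ed : finType) (ep : Ed -> V * V) (A : {set Ed}) : rel V :=
  fun x y => [exists e in A, (ep e == (x, y)) || (ep e == (y, x))].

Definition ncomp (V Ed : finType) (ep : Ed -> V * V) (A : {set Ed}) : nat :=
  n_comp (connect (adjA ep A)) (@predT V).

Definition monoE (V Ed : finType) (ep : Ed -> V * V) (q : nat)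
  (H : {set Ed}) (sigma : {ffun V -> 'I_q}) : {set Ed} :=
  [set e in H | sigma (ep e).1 == sigma (ep e).2].

Definition SW (R : realType) (V Ed : finType) (ep : Ed -> V * V) (q : nat)
  (beta : R) (H : {set Ed}) (sigma tau : {ffun V -> 'I_q}) : R :=
  let p := 1 - expR (- beta) in
  (1 - p) ^+ #|monoE ep H sigma|
  * \sum_(A : {set Ed} | A \subset monoE ep H sigma :&: monoE ep H tau)
      (p / (1 - p)) ^+ #|A| * (q%:R ^- ncomp ep A).

From HB Require Import structures.
From mathcomp Require Import all_boot all_order all_algebra.
From mathcomp Require Import reals.
From mathcomp Require Import sequences exp.
Set Implicit Arguments. Unset Strict Implicit. Unset Printing Implicit Defensive.
Import Order.TTheory GRing.Theory Num.Theory.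
Local Open Scope ring_scope.

(* Write P_H(sigma, tau) = a^|F| * Z(F :&: F'), where a = e^-beta, F and F' are
   the edges of H monochromatic under sigma and tau, and
   Z(S) = sum_(A \subset S) (e^beta - 1)^|A| q^-c(A).  Adding an edge e to H
   raises |F| by at most one and only enlarges the index set of Z, whence the
   factor a from below.  From above, F :&: F' grows at most by e, and
   Z(e |: S) <= (1 + q (e^beta - 1)) Z(S) because adding e to A merges at most
   two components.  Adding the edges of E :\: E0 one at a time gives both
   bounds. *)

Section Components.
Variables (V Ed : finType) (ep : Ed -> V * V).

Lemma adjA_sym (A : {set Ed}) : symmetric (adjA ep A).
Proof.
by move=> x y; apply/existsP/existsP => -[e /andP[eA exy]]; exists e; rewrite eA orbC.
Qed.

Lemma ncompE (A : {set Ed}) : ncomp ep A = #|roots (adjA ep A)|.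
Proof.
have connect2E : connect (connect (adjA ep A)) =2 connect (adjA ep A).
  move=> x y; apply/idP/idP; apply: connect_sub => // u v ruv.
  by rewrite !connect1.
by rewrite /ncomp (eq_n_comp connect2E); apply: eq_card => x; rewrite !inE andbT.
Qed.

Section AddEdge.
Variables (A : {set Ed}) (e : Ed).

Local Notation c := (connect (adjA ep A)).
Let c_sym : connect_sym (adjA ep A) := sym_connect_sym (adjA_sym A).
Let touches z := c z (ep e).1 || c z (ep e).2.

Let touches_connect x y : c x y -> touches y -> touches x.
Proof.
by move=> cxy /orP[] cy; apply/orP; [left | right]; exact: connect_trans cxy cy.
Qed.

Lemma connect_adjA_setU1 x y :
  connect (adjA ep (e |: A)) x y -> c x y || touches x && touches y.
Proof.
move=> /connectP[p + ->]; elim: p x => [|z p IHp] x /=.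
  by rewrite connect0.
case/andP=> /existsP[f /andP[]]; rewrite in_setU1 => /orP[/eqP-> | fA] exz /IHp{IHp}.
  have [tx tz] : touches x /\ touches z.
    by rewrite /touches; case/orP: exz => /eqP-> /=; rewrite !connect0 ?orbT.
  case/orP=> [czy | /andP[_ ->]]; last by rewrite tx orbT.
  by rewrite tx (touches_connect _ tz) ?orbT // c_sym.
have cxz : c x z by apply/connect1/existsP; exists f; rewrite fA.
case/orP=> [czy | /andP[tz ->]]; first by rewrite (connect_trans cxz czy).
by rewrite (touches_connect cxz tz) orbT.
Qed.

(* Away from the component of the second endpoint of e, distinct components
   of A stay distinct in e |: A. *)
Lemma ncomp_setU1 : (ncomp ep A <= (ncomp ep (e |: A)).+1)%N.
Proof.
rewrite !ncompE (cardD1 (fingraph.root (adjA ep A) (ep e).2)).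
set r := fingraph.root (adjA ep A); set r' := fingraph.root (adjA ep (e |: A)).
set D := [predD1 _ & _].
have root_touches x : roots (adjA ep A) x -> x != r (ep e).2 -> touches x ->
    x = r (ep e).1.
  move=> /eqP rx nx /orP[] /(fingraph.rootP c_sym); rewrite rx // => xv.
  by rewrite xv eqxx in nx.
have r'_inj : {in D &, injective r'}.
  move=> x y /andP[nx rx] /andP[ny ry].
  move/(fingraph.rootP (sym_connect_sym (adjA_sym _))).
  case/connect_adjA_setU1/orP => [/(fingraph.rootP c_sym) | /andP[tx ty]].
    by rewrite (eqP rx) (eqP ry).
  by rewrite (root_touches x rx nx tx) (root_touches y ry ny ty).
have : (#|D| <= #|roots (adjA ep (e |: A))|)%N.
  rewrite -(card_in_image r'_inj).
  apply/subset_leq_card/subsetP => _ /imageP[x _ ->].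
  exact: roots_root (sym_connect_sym (adjA_sym _)) x.
by case: (_ \in _); rewrite ?add1n ?add0n // => /leqW.
Qed.

End AddEdge.
End Components.

Lemma sum_subsets_setU1 (M : nmodType) (T : finType) (g : {set T} -> M)
    (e : T) (S : {set T}) : e \notin S ->
  \sum_(A : {set T} | A \subset e |: S) g A
    = \sum_(A : {set T} | A \subset S) (g A + g (e |: A)).
Proof.
move=> eS; rewrite (bigID (fun A : {set T} => e \in A)) /= addrC big_split /=.
have notin_sub (A : {set T}) : A \subset S -> e \notin A.
  by move=> sAS; apply: contraNN eS => /(subsetP sAS).
congr (_ + _).
  apply: eq_bigl => A; apply/andP/idP => [[sA eA] | sAS]; last first.
    by rewrite notin_sub // (subset_trans sAS) ?subsetU1.
  apply/subsetP => x xA; have := subsetP sA x xA; rewrite in_setU1.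
  by case: eqP => [xe | _ //]; rewrite -xe xA in eA.
rewrite (reindex_onto (fun B => e |: B) (fun A => A :\ e)) /=; last first.
  by move=> A /andP[_ eA]; rewrite setD1K.
apply: eq_bigl => B; rewrite setU11 andbT.
apply/andP/idP => [[sB /eqP <-] | sBS]; last first.
  by rewrite setU1K ?notin_sub // setUS.
by rewrite subDset.
Qed.

Section ClusterSum.
Variables (R : numFieldType) (V Ed : finType) (ep : Ed -> V * V) (q : nat).

Definition cluster_sum (w : R) (S : {set Ed}) : R :=
  \sum_(A : {set Ed} | A \subset S) w ^+ #|A| * q%:R ^- ncomp ep A.

Variables (w : R).
Hypothesis w_ge0 : 0 <= w.

Lemma cluster_sum_ge0 (S : {set Ed}) : 0 <= cluster_sum w S.
Proof. by apply: sumr_ge0 => A _; rewrite mulr_ge0 ?invr_ge0 ?exprn_ge0. Qed.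

Lemma cluster_sumS (S S' : {set Ed}) :
  S \subset S' -> cluster_sum w S <= cluster_sum w S'.
Proof.
move=> sSS'; rewrite /cluster_sum [leLHS]big_mkcond [leRHS]big_mkcond /=.
apply: ler_sum => A _; case: ifP => [sAS | _]; first by rewrite (subset_trans sAS).
by case: ifP; rewrite ?mulr_ge0 ?invr_ge0 ?exprn_ge0.
Qed.

Lemma cluster_sum_setU1 (e : Ed) (S : {set Ed}) : (0 < q)%N ->
  cluster_sum w (e |: S) <= (1 + w * q%:R) * cluster_sum w S.
Proof.
move=> q_gt0; have Q_ge1 : 1 <= q%:R :> R by rewrite ler1n.
have Q_gt0 : 0 < q%:R :> R by rewrite ltr0n.
have [eS | eS] := boolP (e \in S).
  by rewrite (setUidPr _) ?sub1set // ler_peMl ?cluster_sum_ge0 // lerDl mulr_ge0.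
rewrite /cluster_sum sum_subsets_setU1 // mulrDl mul1r mulr_sumr -big_split /=.
apply: ler_sum => A sAS; apply: lerD => //.
have eA : e \notin A by apply: contraNN eS => /(subsetP sAS).
have Vq_le : q%:R ^- ncomp ep (e |: A) <= q%:R * q%:R ^- ncomp ep A :> R.
  rewrite -[q%:R ^- _](mulVKf (lt0r_neq0 Q_gt0)) -invfM -exprS.
  apply: ler_wpM2l; first exact: ltW.
  rewrite lef_pV2 ?posrE ?exprn_gt0 //.
  exact/ler_weXn2l/ncomp_setU1.
rewrite cardsU1 eA add1n exprS mulrACA.
by apply: ler_wpM2l; rewrite ?mulr_ge0 ?exprn_ge0.
Qed.

End ClusterSum.

Lemma ler_setD_growth (R : numDomainType) (T : finType) (f : {set T} -> R) (c : R)
    (E0 E : {set T}) : 0 <= c ->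
  (forall H x, f (x |: H) <= c * f H) -> E0 \subset E ->
  f E <= c ^+ #|E :\: E0| * f E0.
Proof.
move=> c_ge0 f_setU1 sE0E.
suff grow s : f (E0 :|: [set x in s]) <= c ^+ size s * f E0.
  have := grow (enum (E :\: E0)).
  by rewrite set_enum -{1}(setIidPr sE0E) setID -cardE.
elim: s => [|x s IHs]; first by rewrite set_nil setU0 expr0 mul1r.
rewrite set_cons setUCA exprS -mulrA.
by apply: le_trans (f_setU1 _ x) _; apply: ler_wpM2l.
Qed.

Lemma ger_setD_growth (R : numDomainType) (T : finType) (f : {set T} -> R) (c : R)
    (E0 E : {set T}) : 0 <= c ->
  (forall H x, c * f H <= f (x |: H)) -> E0 \subset E ->
  c ^+ #|E :\: E0| * f E0 <= f E.
Proof.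
move=> c_ge0 f_setU1 sE0E; rewrite -lerN2 -mulrN.
by apply: (ler_setD_growth (f := fun H => - f H)) => // H x; rewrite mulrN lerN2.
Qed.

Section MonochromaticEdges.
Variables (V Ed : finType) (ep : Ed -> V * V) (q : nat) (sigma : {ffun V -> 'I_q}).

Lemma monoES (H H' : {set Ed}) :
  H \subset H' -> monoE ep H sigma \subset monoE ep H' sigma.
Proof.
by move=> sHH'; apply/subsetP => e; rewrite !inE => /andP[/(subsetP sHH') -> ->].
Qed.

Lemma monoE_setU1 (e : Ed) (H : {set Ed}) :
  monoE ep (e |: H) sigma \subset e |: monoE ep H sigma.
Proof.
by apply/subsetP => f; rewrite !inE => /andP[/orP[-> | ->] ->]; rewrite ?orbT.
Qed.

End MonochromaticEdges.

Lemma expR_sub1_ge0 (R : realType) (x : R) : 0 <= x -> 0 <= expR x - 1.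
Proof. by move=> x_ge0; rewrite subr_ge0 (le_trans _ (expR_ge1Dx x)) // lerDl. Qed.

Section SwendsenWang.
Variables (R : realType) (V Ed : finType) (ep : Ed -> V * V) (q : nat) (beta : R).
Hypothesis beta_ge0 : 0 <= beta.

Let w_ge0 : 0 <= expR beta - 1 := expR_sub1_ge0 beta_ge0.

Lemma SW_clusterE (H : {set Ed}) (sigma tau : {ffun V -> 'I_q}) :
  SW ep beta H sigma tau = expR (- beta) ^+ #|monoE ep H sigma|
    * cluster_sum ep q (expR beta - 1) (monoE ep H sigma :&: monoE ep H tau).
Proof.
rewrite /SW subKr; congr (_ * _); apply: eq_bigr => A _.
by rewrite mulrBl mul1r expRN invrK mulVf // gt_eqF ?expR_gt0.
Qed.

Variables (e : Ed) (H : {set Ed}) (sigma tau : {ffun V -> 'I_q}).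

Lemma SW_setU1_ge :
  expR (- beta) * SW ep beta H sigma tau <= SW ep beta (e |: H) sigma tau.
Proof.
rewrite !SW_clusterE mulrA -exprS; apply: ler_pM.
- by rewrite exprn_ge0 ?expR_ge0.
- exact: cluster_sum_ge0.
- rewrite ler_wiXn2l ?expR_ge0 ?expR_le1 ?oppr_le0 //.
  apply: leq_trans (subset_leq_card (monoE_setU1 _ _ _ _)) _.
  by rewrite cardsU1 -add1n leq_add2r leq_b1.
- by apply: cluster_sumS => //; apply: setISS; apply: monoES; apply: subsetU1.
Qed.

Lemma SW_setU1_le :
  SW ep beta (e |: H) sigma tau
    <= (1 + q%:R * (expR beta - 1)) * SW ep beta H sigma tau.
Proof.
have q_gt0 : (0 < q)%N := leq_ltn_trans (leq0n _) (ltn_ord (sigma (ep e).1)).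
rewrite !SW_clusterE mulrCA; apply: ler_pM.
- by rewrite exprn_ge0 ?expR_ge0.
- exact: cluster_sum_ge0.
- rewrite ler_wiXn2l ?expR_ge0 ?expR_le1 ?oppr_le0 //.
  by apply/subset_leq_card/monoES/subsetU1.
- rewrite (mulrC q%:R).
  apply: le_trans _ (cluster_sum_setU1 _ w_ge0 e _ q_gt0).
  by apply: cluster_sumS => //; rewrite setUIr; apply: setISS; apply: monoE_setU1.
Qed.

End SwendsenWang.

Theorem lemma3p7 (R : realType) (V Ed : finType) (ep : Ed -> V * V)
  (E E0 : {set Ed}) (q : nat) (beta : R) :
  E0 \subset E -> 0 <= beta ->
  forall sigma tau : {ffun V -> 'I_q},
    expR (- beta) ^+ #|E :\: E0| * SW ep beta E0 sigma tau
      <= SW ep beta E sigma tau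
    /\ SW ep beta E sigma tau
      <= (1 + q%:R * (expR beta - 1)) ^+ #|E :\: E0| * SW ep beta E0 sigma tau.
Proof.
move=> sE0E beta_ge0 sigma tau; pose P H := SW ep beta H sigma tau; split.
- apply: (ger_setD_growth (f := P)) sE0E => [|H e]; first exact: expR_ge0.
  exact: SW_setU1_ge.
- apply: (ler_setD_growth (f := P)) sE0E => [|H e].
    by rewrite addr_ge0 ?mulr_ge0 ?expR_sub1_ge0.
  exact: SW_setU1_le.
Qed.
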